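(* Let $W_1$ and $W_2$ be wedges in the hyperbolic plane sharing a common boundary geodesic $g_2$, with their vertices at the two opposite ideal endpoints of $g_2$; let $g_1$ and $g_3$ be the other boundary geodesics of $W_1$ and $W_2$ respectively. Orient $g_2$ so that $g_1$ lies on its left, and let $s(g_2)$ be the shear along $g_2$ of the ideal quadrilateral whose vertices are the endpoints of $g_1$ and $g_3$. Let $h_1$ be a horocyclic arc in $W_1$ orthogonal to and connecting its two boundary sides, and let $h_2$ be the horocyclic arc in $W_2$ orthogonal to its boundary sides that continues $h_1$ (starting at the endpoint of $h_1$ on $g_2$). If $(W_1,W_2)$ is left-open then $\ell(h_2)=\dfrac{e^{s(g_2)}}{\ell(h_1)}$; if $(W_1,W_2)$ is left-closed then $\ell(h_2)=\dfrac{e^{-s(g_2)}}{\ell(h_1)}$.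
   Context: A wedge is the region between two geodesics sharing one ideal endpoint (its vertex); horocyclic arcs in a wedge lie on horocycles centered at its vertex. With $g_2$ oriented so that $g_1$ is on its left, the pair $(W_1,W_2)$ is left-open if $g_2$ shares its initial point with $g_1$ (and its terminal point with $g_3$), and left-closed if $g_2$ shares its initial point with $g_3$ (and its terminal point with $g_1$). Shear: for two ideal triangles $\Delta_1,\Delta_2$ sharing a side $g$, orient $g$ with $\Delta_1$ on its left; $s(g)$ is the signed distance along $g$ from the foot of the perpendicular from the third vertex of $\Delta_1$ to the foot of the perpendicular from the third vertex of $\Delta_2$. $\ell(\cdot)$ denotes hyperbolic length. *)

From Stdlib Require Import Reals.
From Coquelicot Require Import Coquelicot.
Open Scope R_scope.

Inductive ipt := Fin (r : R) | Inf.

Definition inH (p : R * R) : Prop := 0 < snd p.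

Definition on_geod (a b : ipt) (p : R * R) : Prop :=
  inH p /\
  match a, b with
  | Fin a, Fin b => a <> b /\
      (fst p - (a + b) / 2) ^ 2 + snd p ^ 2 = ((a - b) / 2) ^ 2
  | Fin a, Inf | Inf, Fin a => fst p = a
  | Inf, Inf => False
  end.

(* p lies in the open half-plane to the LEFT of the geodesic oriented
   from a to b (standard orientation of the upper half-plane). *)
Definition left_of (a b : ipt) (p : R * R) : Prop :=
  inH p /\
  match a, b with
  | Fin a, Fin b =>
      (a < b /\ (fst p - (a + b) / 2) ^ 2 + snd p ^ 2 > ((a - b) / 2) ^ 2) \/
      (b < a /\ (fst p - (a + b) / 2) ^ 2 + snd p ^ 2 < ((a - b) / 2) ^ 2)
  | Fin a, Inf => fst p < a
  | Inf, Fin b => fst p > b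
  | Inf, Inf => False
  end.

Definition geod_left_of (a b c d : ipt) : Prop :=
  forall p, on_geod c d p -> left_of a b p.

Definition closed_side (a b : ipt) (q p : R * R) : Prop :=
  on_geod a b p \/ (left_of a b q /\ left_of a b p) \/
  (left_of b a q /\ left_of b a p).

Definition wedge_cl (v a a' : ipt) (p : R * R) : Prop :=
  inH p /\
  (forall q, on_geod v a' q -> closed_side v a q p) /\
  (forall q, on_geod v a q -> closed_side v a' q p).

(* Horocycle centred at the ideal point v, with parameter c > 0:
   for v = ∞ the horizontal line y = c; for v = Fin r the Euclidean
   circle of diameter c tangent to the real axis at r. *)
Definition horocycle (v : ipt) (c : R) (p : R * R) : Prop :=
  inH p /\ 0 < c /\
  match v with
  | Inf => snd p = c
  | Fin r => (fst p - r) ^ 2 + (snd p - c / 2) ^ 2 = (c / 2) ^ 2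
  end.

(* The horocyclic arc in the wedge (vertex v, sides (v,a),(v,a')) lying on
   the horocycle of parameter c centred at v: it joins the two sides and is
   orthogonal to them. *)
Definition horo_arc (v a a' : ipt) (c : R) (p : R * R) : Prop :=
  horocycle v c p /\ wedge_cl v a a' p.

(* Euclidean description of a geodesic: vertical line x = r (true, r, 0)
   or semicircle with centre m and radius rho (false, m, rho). *)
Definition gdesc (a b : ipt) : option (bool * R * R) :=
  match a, b with
  | Fin a, Fin b =>
      if Req_EM_T a b then None else Some (false, (a + b) / 2, Rabs (a - b) / 2)
  | Fin a, Inf | Inf, Fin a => Some (true, a, 0)
  | Inf, Inf => None
  end.

(* The geodesics (a,b) and (c,d) meet orthogonally (the model is conformal,
   so hyperbolic angles equal Euclidean angles). *)
Definition geod_orth (a b c d : ipt) : Prop :=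
  match gdesc a b, gdesc c d with
  | Some (false, m1, r1), Some (false, m2, r2) => (m1 - m2) ^ 2 = r1 ^ 2 + r2 ^ 2
  | Some (true, r, _), Some (false, m, _) => m = r
  | Some (false, m, _), Some (true, r, _) => m = r
  | _, _ => False
  end.

Definition foot (p a b : ipt) (f : R * R) : Prop :=
  on_geod a b f /\ exists e, e <> p /\ geod_orth p e a b /\ on_geod p e f.

Definition arcosh (u : R) : R := ln (u + sqrt (u ^ 2 - 1)).
Definition dH (p q : R * R) : R :=
  arcosh (1 + ((fst p - fst q) ^ 2 + (snd p - snd q) ^ 2) /
              (2 * snd p * snd q)).

Definition ahead (a b : ipt) (f1 f2 : R * R) : Prop :=
  match a, b with
  | Fin a, Fin b => (fst f2 - fst f1) * (b - a) > 0
  | Fin _, Inf => snd f2 > snd f1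
  | Inf, Fin _ => snd f2 < snd f1
  | Inf, Inf => False
  end.

Definition sdist (a b : ipt) (f1 f2 : R * R) (d : R) : Prop :=
  (ahead a b f1 f2 /\ d = dH f1 f2) \/ (~ ahead a b f1 f2 /\ d = - dH f1 f2).

(* Shear along the geodesic g oriented a -> b between the ideal triangles
   Δ1 = (a,b,p) (on the left of g) and Δ2 = (a,b,q): signed distance from
   the foot of the perpendicular from p to that from q. *)
Definition is_shear (a b p q : ipt) (s : R) : Prop :=
  exists f1 f2, foot p a b f1 /\ foot q a b f2 /\ sdist a b f1 f2 s.

Definition hlen (g : R -> R * R) : R :=
  RInt (fun t => sqrt ((Derive (fun u => fst (g u)) t) ^ 2 +
                       (Derive (fun u => snd (g u)) t) ^ 2) / snd (g t)) 0 1.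

Definition param_arc (g : R -> R * R) (S : R * R -> Prop) : Prop :=
  (forall t, 0 <= t <= 1 ->
     ex_derive (fun u => fst (g u)) t /\ ex_derive (fun u => snd (g u)) t /\
     continuous (Derive (fun u => fst (g u))) t /\
     continuous (Derive (fun u => snd (g u))) t) /\
  (forall t1 t2, 0 <= t1 <= 1 -> 0 <= t2 <= 1 -> g t1 = g t2 -> t1 = t2) /\
  (forall p, S p <-> exists t, 0 <= t <= 1 /\ g t = p).

Definition arc_length (S : R * R -> Prop) (L : R) : Prop :=
  exists g, param_arc g S /\ hlen g = L.

From Stdlib Require Import Reals Lra Psatz.
From Coquelicot Require Import Coquelicot.
Open Scope R_scope.

(* Move the vertex r of a wedge to infinity by the isometry z |-> -1/(z - r).  The
   wedge becomes a vertical strip over the images of its ideal points, the horocycles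
   centred at r become horizontal lines, and a horocyclic arc across the strip has
   length (width)/(height).  Hence l(h1) = c1 |1/(v1 - p) - 1/(v1 - v2)| when the
   horocycle of h1 has Euclidean diameter c1, and similarly for h2.  Next, the Moebius
   map M(z) = (z - x)/(y - z) sends g2 onto the imaginary axis, the perpendicular
   from an ideal point t onto a circle centred at 0, hence its foot onto i|M(t)|, so
   e^(s(g2)) = |M(q)|/|M(p)|.  Finally the two horocycles meet on g2, which forces
   c1 c2 = (v2 - v1)^2, and then l(h1) l(h2) = |M(q)|/|M(p)| is a rational identity;
   exchanging the roles of x and y inverts |M|, which accounts for the sign of the
   shear in the left-closed case. *)

(** * Total variation of injective C^1 functions *)

Definition between (u v w : R) : Prop := (u - w) * (v - w) <= 0.

Lemma between_Rmin_Rmax u v w : between u v w <-> Rmin u v <= w <= Rmax u v.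
Proof. unfold between, Rmin, Rmax. destruct Rle_dec; split; intros; nra. Qed.

Lemma between_scale k u v w : k <> 0 -> between (k * u) (k * v) (k * w) <-> between u v w.
Proof.
  intros Hk. unfold between.
  replace ((k * u - k * w) * (k * v - k * w)) with (k ^ 2 * ((u - w) * (v - w))) by ring.
  pose proof (pow2_gt_0 k Hk). split; intros; nra.
Qed.

Lemma between_antisym u v p q :
  between u v p -> between u v q -> between p q u -> between p q v ->
  Rabs (q - p) = Rabs (v - u).
Proof.
  rewrite !between_Rmin_Rmax. unfold Rmin, Rmax, Rabs.
  repeat destruct Rle_dec; repeat destruct Rcase_abs; lra.
Qed.

Lemma between_iff_sides u v w : u <> v ->
  between u v w <-> 0 <= (w - u) * (v - u) /\ 0 <= (w - v) * (u - v).
Proof.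
  intros Huv. unfold between.
  destruct (Rle_dec u w); destruct (Rle_dec w v); destruct (Rle_dec u v); split; intros; try split; nra.
Qed.

Section Interval.

Variables a b : R.
Hypothesis a_lt_b : a < b.

Definition injective_on (f : R -> R) : Prop :=
  forall s u, a <= s <= b -> a <= u <= b -> f s = f u -> s = u.

Definition strict_increasing_on (f : R -> R) : Prop :=
  forall s u, a <= s -> s < u -> u <= b -> f s < f u.

Lemma exists_shift_in_interval t d : a <= t <= b -> 0 < d ->
  exists h, h <> 0 /\ Rabs h < d /\ a <= t + h <= b.
Proof.
  intros Ht Hd.
  set (m := Rmin (d / 2) ((b - a) / 2)).
  assert (m_pos : 0 < m) by (apply Rmin_glb_lt; lra).
  assert (m_le_d : m <= d / 2) by apply Rmin_l.
  assert (m_le_ba : m <= (b - a) / 2) by apply Rmin_r.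
  destruct (Rle_dec t ((a + b) / 2)).
  - exists m. rewrite Rabs_right; lra.
  - exists (- m). rewrite Rabs_left; lra.
Qed.

Lemma derive_nonneg_of_nondecreasing (f : R -> R) (t l : R) :
  (forall s u, a <= s -> s <= u -> u <= b -> f s <= f u) ->
  a <= t <= b -> is_derive f t l -> 0 <= l.
Proof.
  intros f_mono Ht Hd. apply is_derive_Reals in Hd.
  destruct (Rle_lt_dec 0 l) as [|l_neg]; [assumption | exfalso].
  destruct (Hd (- l) ltac:(lra)) as [delta Hdelta].
  destruct (exists_shift_in_interval t delta Ht (cond_pos delta))
    as [h [h_ne [h_small Hth]]].
  specialize (Hdelta h h_ne h_small).
  assert (quotient_nonneg : 0 <= (f (t + h) - f t) / h).
  { destruct (Rlt_or_le 0 h).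
    - apply Rdiv_le_0_compat; [|lra].
      assert (f t <= f (t + h)) by (apply f_mono; lra). lra.
    - replace ((f (t + h) - f t) / h) with ((f t - f (t + h)) / - h) by (field; lra).
      apply Rdiv_le_0_compat; [|lra].
      assert (f (t + h) <= f t) by (apply f_mono; lra). lra. }
  pose proof (Rle_abs ((f (t + h) - f t) / h - l)). lra.
Qed.

Lemma derive_zero_of_vanishing (f : R -> R) (t l : R) :
  (forall u, a <= u <= b -> f u = 0) -> a <= t <= b -> is_derive f t l -> l = 0.
Proof.
  intros f0 Ht Hd.
  assert (l_ge : 0 <= l).
  { apply (derive_nonneg_of_nondecreasing f t); auto.
    intros s u Hs Hsu Hu. rewrite !f0; lra. }
  assert (l_le : 0 <= - l).
  { apply (derive_nonneg_of_nondecreasing (fun u => - f u) t); auto using is_derive_opp.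
    intros s u Hs Hsu Hu. rewrite !f0; lra. }
  lra.
Qed.

Section Monotone.

Variable f : R -> R.
Hypothesis f_cont : forall t, a <= t <= b -> continuity_pt f t.
Hypothesis f_inj : injective_on f.

(* Otherwise, by the intermediate value theorem, f would take some value twice. *)
Lemma injective_on_between s t u :
  a <= s -> s < t -> t < u -> u <= b -> f s < f u -> f s < f t < f u.
Proof.
  intros Hs Hst Htu Hu Hfsu.
  assert (ivt : forall p q y, a <= p -> p < q -> q <= b -> f p < y < f q ->
                exists z, p <= z <= q /\ f z = y).
  { intros p q y Hp Hpq Hq Hy.
    destruct (Ranalysis5.IVT_interv (fun x => f x - y) p q) as [z [Hz Efz]]; try lra.
    - intros x Hx. apply continuity_pt_minus; [apply f_cont; lra | apply continuity_pt_const].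
      intros ? ?; reflexivity.
    - exists z. split; [assumption | lra]. }
  split.
  - destruct (Rlt_le_dec (f s) (f t)) as [|Hts]; [assumption | exfalso].
    assert (f t <> f s) by (intro E; apply f_inj in E; lra).
    destruct (ivt t u (f s)) as [z [Hz Efz]]; try lra.
    apply f_inj in Efz; lra.
  - destruct (Rlt_le_dec (f t) (f u)) as [|Hut]; [assumption | exfalso].
    assert (f t <> f u) by (intro E; apply f_inj in E; lra).
    destruct (ivt s t (f u)) as [z [Hz Efz]]; try lra.
    apply f_inj in Efz; lra.
Qed.

Lemma strict_increasing_on_of_injective : f a < f b -> strict_increasing_on f.
Proof.
  intros Hfab.
  assert (below_fb : forall s, a <= s < b -> f s < f b).
  { intros s Hs. destruct (Req_dec s a) as [->|]; [assumption|].
    apply (injective_on_between a s b); lra. }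
  intros s u Hs Hsu Hu. destruct (Req_dec u b) as [->|].
  - apply below_fb; lra.
  - apply (injective_on_between s u b); try lra. apply below_fb; lra.
Qed.

End Monotone.

Lemma injective_on_monotone (f : R -> R) :
  (forall t, a <= t <= b -> continuity_pt f t) -> injective_on f ->
  strict_increasing_on f \/ strict_increasing_on (fun t => - f t).
Proof.
  intros f_cont f_inj. destruct (Rtotal_order (f a) (f b)) as [H|[H|H]].
  - left. apply strict_increasing_on_of_injective; assumption.
  - apply f_inj in H; lra.
  - right. apply strict_increasing_on_of_injective; [| |lra].
    + intros t Ht. apply continuity_pt_opp; auto.
    + intros s u Hs Hu E. apply f_inj; auto. lra.
Qed.

Lemma RInt_abs_derive_increasing (psi dpsi : R -> R) :
  (forall t, a <= t <= b -> is_derive psi t (dpsi t)) ->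
  (forall t, a <= t <= b -> continuous dpsi t) ->
  strict_increasing_on psi ->
  RInt (fun t => Rabs (dpsi t)) a b = psi b - psi a.
Proof.
  intros Hd Hc Hinc.
  rewrite (RInt_ext _ dpsi).
  - apply is_RInt_unique, (is_RInt_derive psi dpsi);
      rewrite Rmin_left, Rmax_right by lra; assumption.
  - rewrite Rmin_left, Rmax_right by lra. intros t Ht.
    apply Rabs_right, Rle_ge, (derive_nonneg_of_nondecreasing psi t); [|lra|apply Hd; lra].
    intros s u Hs Hsu Hu. destruct (Req_dec s u) as [->|]; [lra|].
    apply Rlt_le, Hinc; lra.
Qed.

Lemma RInt_abs_derive_injective (psi dpsi : R -> R) :
  (forall t, a <= t <= b -> is_derive psi t (dpsi t)) ->
  (forall t, a <= t <= b -> continuous dpsi t) ->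
  injective_on psi ->
  RInt (fun t => Rabs (dpsi t)) a b = Rabs (psi b - psi a).
Proof.
  intros Hd Hc Hinj.
  assert (psi_cont : forall t, a <= t <= b -> continuity_pt psi t).
  { intros t Ht. apply continuity_pt_filterlim, (ex_derive_continuous (V := R_NormedModule)).
    exists (dpsi t). auto. }
  destruct (injective_on_monotone psi psi_cont Hinj) as [Hinc|Hdec].
  - rewrite (RInt_abs_derive_increasing psi dpsi); auto.
    specialize (Hinc a b). rewrite Rabs_right; lra.
  - rewrite (RInt_ext _ (fun t => Rabs (- dpsi t))), (RInt_abs_derive_increasing (fun t => - psi t)); auto.
    + specialize (Hdec a b). rewrite Rabs_left by lra. lra.
    + intros t Ht. apply (is_derive_opp psi). auto.
    + intros t Ht. apply (continuous_opp dpsi). auto.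
    + intros t _. symmetry. apply Rabs_Ropp.
Qed.

Lemma injective_on_between_ends (psi : R -> R) :
  (forall t, a <= t <= b -> continuity_pt psi t) -> injective_on psi ->
  forall t, a <= t <= b -> between (psi a) (psi b) (psi t).
Proof.
  intros Hc Hinj t Ht. unfold between.
  destruct (Req_dec t a) as [->|]; [nra|]. destruct (Req_dec t b) as [->|]; [nra|].
  destruct (injective_on_monotone psi Hc Hinj) as [Hm|Hm];
    assert (Hat := Hm a t); assert (Htb := Hm t b); nra.
Qed.

Lemma RInt_abs_derive_onto_segment (psi dpsi : R -> R) u v :
  (forall t, a <= t <= b -> is_derive psi t (dpsi t)) ->
  (forall t, a <= t <= b -> continuous dpsi t) ->
  injective_on psi ->
  (forall t, a <= t <= b -> between u v (psi t)) ->
  (exists t, a <= t <= b /\ psi t = u) -> (exists t, a <= t <= b /\ psi t = v) ->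
  RInt (fun t => Rabs (dpsi t)) a b = Rabs (v - u).
Proof.
  intros Hd Hc Hinj Hrange [tu [Htu <-]] [tv [Htv <-]].
  assert (psi_cont : forall t, a <= t <= b -> continuity_pt psi t).
  { intros t Ht. apply continuity_pt_filterlim, (ex_derive_continuous (V := R_NormedModule)).
    exists (dpsi t). auto. }
  rewrite (RInt_abs_derive_injective psi dpsi); auto.
  apply between_antisym; try (apply Hrange; lra);
    apply injective_on_between_ends; assumption.
Qed.

End Interval.

(** * Wedges *)

(* Real part of the image of a point (resp. of an ideal point) under the isometry
   z |-> -1/(z - r) if v = Fin r, the identity if v = Inf.  It sends v to infinity and
   the geodesic from v to w onto the vertical line over ideal_abscissa_from v w. *)
Definition abscissa_from (v : ipt) (P : R * R) : R :=
  match v with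
  | Fin r => (r - fst P) / ((fst P - r) ^ 2 + snd P ^ 2)
  | Inf => fst P
  end.

Definition ideal_abscissa_from (v w : ipt) : R :=
  match v, w with
  | Fin r, Fin t => 1 / (r - t)
  | Inf, Fin t => t
  | _, _ => 0
  end.

Lemma Fin_neq s r : Fin s <> Fin r -> s <> r.
Proof. congruence. Qed.

Lemma dist2_pos (P : R * R) r : inH P -> 0 < (fst P - r) ^ 2 + snd P ^ 2.
Proof.
  unfold inH. intros HP. pose proof (pow2_ge_0 (fst P - r)). pose proof (pow_lt _ 2 HP). lra.
Qed.

Lemma sides_fin_fin r t P : r <> t -> inH P ->
  let A := abscissa_from (Fin r) P in let m := ideal_abscissa_from (Fin r) (Fin t) in
  (on_geod (Fin r) (Fin t) P <-> A = m) /\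
  (left_of (Fin r) (Fin t) P <-> m < A) /\
  (left_of (Fin t) (Fin r) P <-> A < m).
Proof.
  intros Hrt HP A m. pose proof (dist2_pos P r HP) as HD.
  assert (key : (t - r) * ((fst P - (r + t) / 2) ^ 2 + snd P ^ 2 - ((r - t) / 2) ^ 2)
              = ((fst P - r) ^ 2 + snd P ^ 2) * (r - t) ^ 2 * (A - m)).
  { unfold A, m, abscissa_from, ideal_abscissa_from. field. split; lra. }
  replace ((fst P - (t + r) / 2) ^ 2 + snd P ^ 2) with ((fst P - (r + t) / 2) ^ 2 + snd P ^ 2)
    by (f_equal; f_equal; field).
  replace (((t - r) / 2) ^ 2) with (((r - t) / 2) ^ 2) by field.
  set (E := (fst P - (r + t) / 2) ^ 2 + snd P ^ 2 - ((r - t) / 2) ^ 2) in key.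
  assert (HK : 0 < ((fst P - r) ^ 2 + snd P ^ 2) * (r - t) ^ 2)
    by (apply Rmult_lt_0_compat; auto; apply pow2_gt_0; lra).
  set (K := ((fst P - r) ^ 2 + snd P ^ 2) * (r - t) ^ 2) in *. clearbody A m K.
  assert (pos_iff : 0 < (t - r) * E <-> m < A) by (rewrite key; split; intro; nra).
  assert (neg_iff : (t - r) * E < 0 <-> A < m) by (rewrite key; split; intro; nra).
  unfold on_geod, left_of; cbn iota. split; [|split]; split.
  - intros [_ [_ on_circle]]. assert (E0 : E = 0) by (unfold E; lra).
    rewrite E0, Rmult_0_r in key. destruct (Rmult_integral K (A - m)); lra.
  - intros ->. repeat split; auto. replace (m - m) with 0 in key by ring.
    assert (E0 : E = 0) by (destruct (Rmult_integral (t - r) E); lra). unfold E in E0. lra.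
  - intros [_ [[Hlt Hgt] | [Hlt Hgt]]]; apply pos_iff; unfold E; nra.
  - intros Hlt%pos_iff. unfold E in Hlt. split; auto.
    destruct (Rlt_dec r t); [left|right]; split; nra.
  - intros [_ [[Hlt Hgt] | [Hlt Hgt]]]; apply neg_iff; unfold E; nra.
  - intros Hlt%neg_iff. unfold E in Hlt. split; auto.
    destruct (Rlt_dec t r); [left|right]; split; nra.
Qed.

Lemma sides_of_geodesic v w P : v <> w -> inH P ->
  (on_geod v w P <-> abscissa_from v P = ideal_abscissa_from v w) /\
  (left_of v w P <-> ideal_abscissa_from v w < abscissa_from v P) /\
  (left_of w v P <-> abscissa_from v P < ideal_abscissa_from v w).
Proof.
  intros Hvw HP. destruct v as [r|]; destruct w as [t|]; [| | |congruence].
  - apply sides_fin_fin; congruence.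
  - pose proof (dist2_pos P r HP) as HD. unfold on_geod, left_of, abscissa_from, ideal_abscissa_from.
    set (D := (fst P - r) ^ 2 + snd P ^ 2) in *.
    assert (Hx : r - fst P = (r - fst P) / D * D) by (field; lra).
    set (A := (r - fst P) / D) in *. clearbody A D.
    split; [|split]; split; [intros [_ E] | intros E; split | intros [_ E] | intros E; split
                            | intros [_ E] | intros E; split]; auto; nra.
  - unfold on_geod, left_of, abscissa_from, ideal_abscissa_from.
    split; [|split]; split; [intros [_ E] | intros E; split | intros [_ E] | intros E; split
                            | intros [_ E] | intros E; split]; auto; lra.
Qed.

Lemma geod_point v w : v <> w -> exists P, on_geod v w P.
Proof.
  intros Hvw. destruct v as [r|]; destruct w as [t|]; [| | |congruence].
  - assert (Hrt : r <> t) by congruence.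
    pose proof (Rabs_pos_lt (r - t) ltac:(lra)).
    exists ((r + t) / 2, Rabs (r - t) / 2). unfold on_geod, inH; cbn [fst snd].
    repeat split; [lra | assumption |].
    replace ((Rabs (r - t) / 2) ^ 2) with (Rabs (r - t) ^ 2 / 4) by field.
    rewrite pow2_abs. field.
  - exists (r, 1). unfold on_geod, inH; simpl; lra.
  - exists (t, 1). unfold on_geod, inH; simpl; lra.
Qed.

Lemma ideal_abscissa_from_inj v w w' : v <> w -> v <> w' ->
  ideal_abscissa_from v w = ideal_abscissa_from v w' -> w = w'.
Proof.
  intros Hw Hw' E. destruct v as [r|]; destruct w as [t|]; destruct w' as [t'|];
    cbn in E; try congruence; unfold Rdiv in E; rewrite ?Rmult_1_l in E.
  - apply Fin_neq in Hw, Hw'. apply Rinv_eq_reg in E. f_equal. lra.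
  - apply Fin_neq in Hw. exfalso. revert E. apply Rinv_neq_0_compat. lra.
  - apply Fin_neq in Hw'. exfalso. symmetry in E. revert E. apply Rinv_neq_0_compat. lra.
Qed.

Lemma closed_side_iff v w q P : v <> w -> inH q -> inH P ->
  abscissa_from v q <> ideal_abscissa_from v w ->
  closed_side v w q P <->
  0 <= (abscissa_from v P - ideal_abscissa_from v w) * (abscissa_from v q - ideal_abscissa_from v w).
Proof.
  intros Hvw Hq HP Hqm.
  destruct (sides_of_geodesic v w P Hvw HP) as [onP [leftP rightP]].
  destruct (sides_of_geodesic v w q Hvw Hq) as [_ [leftq rightq]].
  unfold closed_side. rewrite onP, leftP, rightP, leftq, rightq.
  split.
  - intros [E | [[H1 H2] | [H1 H2]]]; [rewrite E|..]; nra.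
  - intros Hprod. destruct (Req_dec (abscissa_from v P) (ideal_abscissa_from v w)); [left; auto|right].
    destruct (Rlt_dec (ideal_abscissa_from v w) (abscissa_from v q)); [left|right]; split; nra.
Qed.

Lemma wedge_cl_iff v w w' P : v <> w -> v <> w' -> w <> w' ->
  wedge_cl v w w' P <->
  inH P /\ between (ideal_abscissa_from v w) (ideal_abscissa_from v w') (abscissa_from v P).
Proof.
  intros Hw Hw' Hww'.
  assert (Hm : ideal_abscissa_from v w <> ideal_abscissa_from v w')
    by (intro E; apply Hww', (ideal_abscissa_from_inj v); auto).
  assert (on_iff : forall u q, v <> u -> on_geod v u q ->
            inH q /\ abscissa_from v q = ideal_abscissa_from v u).
  { intros u q Hu Hq. pose proof (proj1 Hq) as Hin.
    split; [assumption|]. apply (sides_of_geodesic v u q Hu Hin). assumption. }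
  unfold wedge_cl. rewrite between_iff_sides by assumption. split.
  - intros [HP [side_w side_w']]. split; [assumption|].
    destruct (geod_point v w' Hw') as [q' Hq']. destruct (geod_point v w Hw) as [q Hq].
    specialize (side_w q' Hq'). specialize (side_w' q Hq).
    destruct (on_iff w' q' Hw' Hq') as [Hin' E']. destruct (on_iff w q Hw Hq) as [Hin E].
    rewrite closed_side_iff, E' in side_w by (auto; rewrite E'; auto).
    rewrite closed_side_iff, E in side_w' by (auto; rewrite E; auto).
    split; assumption.
  - intros [HP [side_w side_w']]. split; [assumption|]. split.
    + intros q' Hq'. destruct (on_iff w' q' Hw' Hq') as [Hin' E'].
      rewrite closed_side_iff, E' by (auto; rewrite E'; auto). assumption.
    + intros q Hq. destruct (on_iff w q Hw Hq) as [Hin E].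
      rewrite closed_side_iff, E by (auto; rewrite E; auto). assumption.
Qed.

(** * Horocyclic arcs *)

(* Under the isometry above the horocycle of parameter c centred at v becomes a
   horizontal line at height 1/horo_scale v c; horo_coord is a hyperbolic arc-length
   parameter on it. *)
Definition horo_coord (v : ipt) (c : R) (P : R * R) : R :=
  match v with Fin r => (r - fst P) / snd P | Inf => fst P / c end.

Definition horo_scale (v : ipt) (c : R) : R :=
  match v with Fin _ => c | Inf => / c end.

Lemma horo_scale_pos v c : 0 < c -> 0 < horo_scale v c.
Proof. destruct v; simpl; auto using Rinv_0_lt_compat. Qed.

Lemma horocycle_fin_eq r c P : horocycle (Fin r) c P -> (fst P - r) ^ 2 + snd P ^ 2 = c * snd P.
Proof. intros [_ [_ E]]. lra. Qed.

Lemma horo_coord_abscissa v c P : horocycle v c P ->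
  horo_coord v c P = horo_scale v c * abscissa_from v P.
Proof.
  intros Hh. pose proof Hh as [HP [Hc _]]. unfold inH in HP.
  destruct v as [r|]; cbn [horo_coord horo_scale abscissa_from].
  - rewrite (horocycle_fin_eq r c P Hh). field. lra.
  - field. lra.
Qed.

Lemma horo_coord_inj v c P Q : horocycle v c P -> horocycle v c Q ->
  horo_coord v c P = horo_coord v c Q -> P = Q.
Proof.
  intros HhP HhQ E. pose proof HhP as [HP [Hc _]]. pose proof HhQ as [HQ _].
  unfold inH in HP, HQ. destruct P as [x1 y1], Q as [x2 y2]. cbn [fst snd] in HP, HQ.
  destruct v as [r|].
  - pose proof (horocycle_fin_eq r c _ HhP) as E1. pose proof (horocycle_fin_eq r c _ HhQ) as E2.
    cbn [horo_coord fst snd] in E, E1, E2. set (k := (r - x1) / y1) in E.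
    assert (X1 : r - x1 = k * y1) by (unfold k; field; lra).
    assert (X2 : r - x2 = k * y2) by (rewrite E; field; lra).
    assert (Y1 : y1 * (1 + k ^ 2) = c) by (apply (Rmult_eq_reg_l y1); nra).
    assert (Y2 : y2 * (1 + k ^ 2) = c) by (apply (Rmult_eq_reg_l y2); nra).
    assert (y1 = y2) by (pose proof (pow2_ge_0 k); nra).
    subst y2. f_equal. lra.
  - destruct HhP as [_ [_ E1]], HhQ as [_ [_ E2]]. cbn [horo_coord fst snd] in E, E1, E2. subst y1 y2.
    f_equal. apply (Rmult_eq_reg_r (/ c)); [exact E | apply Rinv_neq_0_compat; lra].
Qed.

Lemma horo_coord_surj v c k : 0 < c -> exists P, horocycle v c P /\ horo_coord v c P = k.
Proof.
  intros Hc. destruct v as [r|].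
  - pose proof (pow2_ge_0 k).
    assert (Hy : 0 < c / (1 + k ^ 2)) by (apply Rdiv_lt_0_compat; lra).
    exists (r - k * (c / (1 + k ^ 2)), c / (1 + k ^ 2)).
    unfold horocycle, horo_coord, inH; cbn [fst snd]. repeat split; [assumption | assumption | field; lra | field; lra].
  - exists (k * c, c). unfold horocycle, horo_coord, inH; cbn [fst snd]. repeat split; [assumption..| field; lra].
Qed.

Lemma horo_arc_iff v w w' c P : 0 < c -> v <> w -> v <> w' -> w <> w' ->
  horo_arc v w w' c P <->
  horocycle v c P /\
  between (horo_scale v c * ideal_abscissa_from v w) (horo_scale v c * ideal_abscissa_from v w')
          (horo_coord v c P).
Proof.
  intros Hc Hw Hw' Hww'. unfold horo_arc. rewrite wedge_cl_iff by assumption.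
  split; intros [Hh Hbtw]; split; try assumption;
    rewrite horo_coord_abscissa, between_scale in * by (auto; apply Rgt_not_eq, horo_scale_pos, Hc).
  - apply Hbtw.
  - split; [apply Hh | assumption].
Qed.

Definition horo_rate (v : ipt) (c : R) (g : R -> R * R) (t : R) : R :=
  let X := fun u => fst (g u) in
  let Y := fun u => snd (g u) in
  match v with
  | Fin r => ((X t - r) * Derive Y t - Derive X t * Y t) / (Y t * Y t)
  | Inf => Derive X t / c
  end.

Lemma is_derive_horo_coord v c (g : R -> R * R) t : 0 < c ->
  ex_derive (fun u => fst (g u)) t -> ex_derive (fun u => snd (g u)) t -> snd (g t) <> 0 ->
  is_derive (fun u => horo_coord v c (g u)) t (horo_rate v c g t).
Proof.
  intros Hc HX HY Ht.
  set (X := fun u => fst (g u)) in *. set (Y := fun u => snd (g u)) in *.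
  destruct v as [r|].
  - change (is_derive (fun u => (r - X u) / Y u) t
              (((X t - r) * Derive Y t - Derive X t * Y t) / (Y t * Y t))).
    auto_derive; [repeat split; assumption |].
    change (Derive (fun x => X x)) with (Derive X). change (Derive (fun x => Y x)) with (Derive Y).
    field. assumption.
  - change (is_derive (fun u => X u / c) t (Derive X t / c)).
    auto_derive; [assumption |]. change (Derive (fun x => X x)) with (Derive X). field. lra.
Qed.

Lemma continuous_horo_rate v c (g : R -> R * R) t : 0 < c ->
  ex_derive (fun u => fst (g u)) t -> ex_derive (fun u => snd (g u)) t ->
  continuous (Derive (fun u => fst (g u))) t -> continuous (Derive (fun u => snd (g u))) t ->
  snd (g t) <> 0 -> continuous (horo_rate v c g) t.
Proof.
  intros Hc HX HY HdX HdY Ht. apply continuity_pt_filterlim.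
  apply continuity_pt_filterlim in HdX, HdY.
  apply (ex_derive_continuous (V := R_NormedModule)), continuity_pt_filterlim in HX, HY.
  unfold horo_rate. destruct v as [r|].
  - apply continuity_pt_div; [| |apply Rmult_integral_contrapositive; split; assumption].
    + apply continuity_pt_minus; apply continuity_pt_mult; try assumption.
      apply continuity_pt_minus; [assumption | apply continuity_pt_const; intros ? ?; reflexivity].
    + apply continuity_pt_mult; assumption.
  - apply continuity_pt_div; [assumption | apply continuity_pt_const; intros ? ?; reflexivity | lra].
Qed.

Lemma speed_on_circle A Y dX dY c : 0 < Y -> A ^ 2 + Y ^ 2 = c * Y ->
  2 * A * dX + 2 * Y * dY - c * dY = 0 ->
  sqrt (dX ^ 2 + dY ^ 2) / Y = Rabs ((A * dY - dX * Y) / (Y * Y)).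
Proof.
  intros HY on_circle tangent.
  (* [tangent] says that (dX, dY) is orthogonal to the radius (A, Y - c/2). *)
  assert (decomposition : (A * dY - dX * Y) ^ 2 - (dX ^ 2 + dY ^ 2) * Y ^ 2 =
            - Y * dY * (2 * A * dX + 2 * Y * dY - c * dY) + dY ^ 2 * (A ^ 2 + Y ^ 2 - c * Y))
    by ring.
  rewrite tangent, on_circle in decomposition.
  replace (dX ^ 2 + dY ^ 2) with (Rsqr ((A * dY - dX * Y) / Y)).
  2: { unfold Rsqr. replace ((A * dY - dX * Y) / Y * ((A * dY - dX * Y) / Y))
         with ((A * dY - dX * Y) ^ 2 / Y ^ 2) by (field; lra).
       replace ((A * dY - dX * Y) ^ 2) with ((dX ^ 2 + dY ^ 2) * Y ^ 2) by lra.
       field. lra. }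
  rewrite sqrt_Rsqr_abs, Rabs_div, Rabs_div, (Rabs_right Y), (Rabs_right (Y * Y)) by nra.
  field. lra.
Qed.

Lemma hyperbolic_speed_on_horocycle v c (g : R -> R * R) t :
  (forall u, 0 <= u <= 1 -> horocycle v c (g u)) -> 0 <= t <= 1 ->
  ex_derive (fun u => fst (g u)) t -> ex_derive (fun u => snd (g u)) t ->
  sqrt (Derive (fun u => fst (g u)) t ^ 2 + Derive (fun u => snd (g u)) t ^ 2) / snd (g t)
  = Rabs (horo_rate v c g t).
Proof.
  intros Hh Ht HX HY. destruct (Hh t Ht) as [HYt [Hc Ht_on]]. unfold inH in HYt.
  unfold horo_rate.
  set (X := fun u => fst (g u)) in *. set (Y := fun u => snd (g u)) in *.
  change (snd (g t)) with (Y t) in *. change (fst (g t)) with (X t).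
  destruct v as [r|].
  - apply (speed_on_circle _ _ _ _ c HYt (horocycle_fin_eq r c _ (Hh t Ht))).
    apply (derive_zero_of_vanishing 0 1 Rlt_0_1
             (fun u => (X u - r) ^ 2 + Y u ^ 2 - c * Y u) t); [|assumption|].
    + intros u Hu. unfold X, Y. rewrite (horocycle_fin_eq r c _ (Hh u Hu)). ring.
    + auto_derive; [repeat split; assumption |].
      unfold X, Y. ring.
  - assert (dY0 : Derive Y t = 0).
    { apply (derive_zero_of_vanishing 0 1 Rlt_0_1 (fun u => Y u - c) t); [|assumption|].
      - intros u Hu. destruct (Hh u Hu) as [_ [_ E]]. unfold Y. lra.
      - auto_derive; [assumption |]. change (Derive (fun x => Y x)) with (Derive Y). ring. }
    rewrite dY0, Ht_on, Rabs_div, (Rabs_right c) by lra.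
    replace (Derive X t ^ 2 + 0 ^ 2) with (Rsqr (Derive X t)) by (unfold Rsqr; ring).
    rewrite sqrt_Rsqr_abs. reflexivity.
Qed.

Lemma horo_arc_length v w w' c L : 0 < c -> v <> w -> v <> w' -> w <> w' ->
  arc_length (horo_arc v w w' c) L ->
  L = horo_scale v c * Rabs (ideal_abscissa_from v w' - ideal_abscissa_from v w).
Proof.
  intros Hc Hw Hw' Hww' [g [[Hreg [Hinj Himg]] <-]].
  assert (on_arc : forall t, 0 <= t <= 1 -> horo_arc v w w' c (g t))
    by (intros t Ht; apply Himg; exists t; auto).
  assert (on_horo : forall t, 0 <= t <= 1 -> horocycle v c (g t)) by apply on_arc.
  assert (Y_ne0 : forall t, 0 <= t <= 1 -> snd (g t) <> 0)
    by (intros t Ht; destruct (on_horo t Ht) as [HY _]; unfold inH in HY; lra).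
  assert (attained : forall k, between (horo_scale v c * ideal_abscissa_from v w)
                                  (horo_scale v c * ideal_abscissa_from v w') k ->
            exists t, 0 <= t <= 1 /\ horo_coord v c (g t) = k).
  { intros k Hk. destruct (horo_coord_surj v c k Hc) as [P [HP <-]].
    destruct (proj1 (Himg P)) as [t [Ht <-]];
      [apply horo_arc_iff; auto | exists t; auto]. }
  unfold hlen. rewrite (RInt_ext _ (fun t => Rabs (horo_rate v c g t))).
  - rewrite (RInt_abs_derive_onto_segment 0 1 Rlt_0_1 (fun t => horo_coord v c (g t)) _
               (horo_scale v c * ideal_abscissa_from v w) (horo_scale v c * ideal_abscissa_from v w')).
    + rewrite <- Rmult_minus_distr_l, Rabs_mult, (Rabs_right (horo_scale v c)); [reflexivity|].
      apply Rle_ge, Rlt_le, horo_scale_pos, Hc.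
    + intros t Ht. destruct (Hreg t Ht) as [HX [HY _]]. apply is_derive_horo_coord; auto.
    + intros t Ht. destruct (Hreg t Ht) as [HX [HY [HdX HdY]]]. apply continuous_horo_rate; auto.
    + intros t1 t2 Ht1 Ht2 E. apply Hinj; auto. apply (horo_coord_inj v c); auto.
    + intros t Ht. apply (horo_arc_iff v w w' c); auto.
    + apply attained. unfold between. nra.
    + apply attained. unfold between. nra.
  - rewrite Rmin_left, Rmax_right by lra. intros t Ht.
    destruct (Hreg t ltac:(lra)) as [HX [HY _]].
    apply hyperbolic_speed_on_horocycle; auto; lra.
Qed.

(** * Shears *)

(* The Moebius map z |-> (z - x)/(y - z) (z - x if y = Inf, 1/(y - z) if x = Inf) sends
   x to 0, y to infinity and the geodesic from x to y onto the imaginary axis: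
   geod_coord is the height of the image of a point of that geodesic, ideal_coord the
   image of an ideal point. *)
Definition geod_coord (x y : ipt) (P : R * R) : R :=
  match x, y with
  | Fin a, Fin b => sqrt ((fst P - a) / (b - fst P))
  | Fin _, Inf => snd P
  | Inf, Fin _ => 1 / snd P
  | Inf, Inf => 0
  end.

Definition ideal_coord (x y p : ipt) : R :=
  match x, y, p with
  | Fin a, Fin b, Fin t => (t - a) / (b - t)
  | Fin _, Fin _, Inf => -1
  | Fin a, Inf, Fin t => t - a
  | Inf, Fin b, Fin t => 1 / (b - t)
  | _, _, _ => 0
  end.

Lemma sqr_pos_eq_abs u z : 0 < u -> u ^ 2 = z ^ 2 -> u = Rabs z.
Proof.
  intros Hu E. apply Rsqr_inj; [lra | apply Rabs_pos |].
  rewrite <- Rsqr_abs, !Rsqr_pow2. exact E.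
Qed.

Lemma on_geod_fin_fin a b P : on_geod (Fin a) (Fin b) P ->
  let l := geod_coord (Fin a) (Fin b) P in
  0 < l /\ fst P = (a + b * l ^ 2) / (1 + l ^ 2) /\ snd P = l * Rabs (b - a) / (1 + l ^ 2).
Proof.
  intros [HP [Hab on_circle]] l. unfold inH in HP.
  assert (chord : (fst P - a) * (b - fst P) = snd P ^ 2) by lra.
  pose proof (pow_lt _ 2 HP) as HY2.
  assert (Hbx : b - fst P <> 0) by (intro Z; rewrite Z in chord; lra).
  assert (ratio_pos : 0 < (fst P - a) / (b - fst P)).
  { replace ((fst P - a) / (b - fst P)) with (snd P ^ 2 / (b - fst P) ^ 2)
      by (rewrite <- chord; field; assumption).
    apply Rdiv_lt_0_compat; [assumption | apply pow2_gt_0, Hbx]. }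
  assert (Hl : 0 < l) by (apply sqrt_lt_R0, ratio_pos).
  assert (Hl2 : l ^ 2 = (fst P - a) / (b - fst P))
    by (unfold l, geod_coord; rewrite <- Rsqr_pow2; apply Rsqr_sqrt; lra).
  assert (Hl2' : l ^ 2 * (b - fst P) = fst P - a) by (rewrite Hl2; field; assumption).
  pose proof (pow2_ge_0 l).
  assert (Hx : fst P = (a + b * l ^ 2) / (1 + l ^ 2)).
  { apply (Rmult_eq_reg_r (1 + l ^ 2)); [| lra].
    unfold Rdiv. rewrite Rmult_assoc, Rinv_l, Rmult_1_r by lra. lra. }
  split; [assumption | split; [assumption |]].
  replace (l * Rabs (b - a) / (1 + l ^ 2)) with (l * Rabs (b - fst P)).
  - rewrite <- (Rabs_right l), <- Rabs_mult by lra. apply sqr_pos_eq_abs; [assumption |].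
    rewrite <- chord, <- Hl2'. ring.
  - rewrite Hx. replace (b - (a + b * l ^ 2) / (1 + l ^ 2)) with ((b - a) / (1 + l ^ 2)) by (field; lra).
    rewrite Rabs_div, (Rabs_right (1 + l ^ 2)) by lra. field. lra.
Qed.

Lemma geod_coord_pos x y P : on_geod x y P -> 0 < geod_coord x y P.
Proof.
  intros HP. destruct x as [a|]; destruct y as [b|].
  - apply (on_geod_fin_fin a b P HP).
  - apply HP.
  - destruct HP as [HY _]. unfold inH in HY. cbn. apply Rdiv_lt_0_compat; lra.
  - destruct HP as [_ []].
Qed.

Lemma arcosh_ratio_le l1 l2 : 0 < l2 -> l2 <= l1 ->
  arcosh ((l1 ^ 2 + l2 ^ 2) / (2 * l1 * l2)) = ln l1 - ln l2.
Proof.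
  intros H2 H12. unfold arcosh.
  replace (((l1 ^ 2 + l2 ^ 2) / (2 * l1 * l2)) ^ 2 - 1)
    with (Rsqr ((l1 ^ 2 - l2 ^ 2) / (2 * l1 * l2))) by (unfold Rsqr; field; lra).
  rewrite sqrt_Rsqr by (apply Rdiv_le_0_compat; nra).
  replace ((l1 ^ 2 + l2 ^ 2) / (2 * l1 * l2) + (l1 ^ 2 - l2 ^ 2) / (2 * l1 * l2))
    with (l1 * / l2) by (field; lra).
  rewrite ln_mult, ln_Rinv by (auto using Rinv_0_lt_compat; lra). ring.
Qed.

Lemma arcosh_ratio l1 l2 : 0 < l1 -> 0 < l2 ->
  arcosh ((l1 ^ 2 + l2 ^ 2) / (2 * l1 * l2)) = Rabs (ln l1 - ln l2).
Proof.
  intros H1 H2. destruct (Rle_lt_dec l2 l1) as [H21|H12].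
  - rewrite arcosh_ratio_le by assumption.
    rewrite Rabs_right; [reflexivity|]. apply Rle_ge. pose proof (ln_le l2 l1 H2 H21). lra.
  - replace ((l1 ^ 2 + l2 ^ 2) / (2 * l1 * l2)) with ((l2 ^ 2 + l1 ^ 2) / (2 * l2 * l1))
      by (field; lra).
    rewrite arcosh_ratio_le by lra. rewrite Rabs_left; [ring|].
    pose proof (ln_increasing l1 l2 H1 H12). lra.
Qed.

Lemma dH_geod_coord x y P Q : on_geod x y P -> on_geod x y Q ->
  dH P Q = Rabs (ln (geod_coord x y P) - ln (geod_coord x y Q)).
Proof.
  intros HP HQ. rewrite <- arcosh_ratio by (apply geod_coord_pos; assumption).
  unfold dH. f_equal.
  destruct x as [a|]; destruct y as [b|].
  - pose proof (proj1 (proj2 HP)) as Hab.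
    destruct (on_geod_fin_fin a b P HP) as [HlP [XP YP]].
    destruct (on_geod_fin_fin a b Q HQ) as [HlQ [XQ YQ]].
    rewrite XP, XQ, YP, YQ.
    set (lP := geod_coord (Fin a) (Fin b) P) in *. set (lQ := geod_coord (Fin a) (Fin b) Q) in *.
    assert (Hk : 0 < Rabs (b - a)) by (apply Rabs_pos_lt; lra).
    pose proof (pow2_ge_0 lP). pose proof (pow2_ge_0 lQ).
    unfold Rabs in *. destruct Rcase_abs; field; repeat split; lra.
  - destruct HP as [HYP XP], HQ as [HYQ XQ]. unfold inH in HYP, HYQ. cbn [geod_coord].
    rewrite XP, XQ. field. lra.
  - destruct HP as [HYP XP], HQ as [HYQ XQ]. unfold inH in HYP, HYQ. cbn [geod_coord].
    rewrite XP, XQ. field. lra.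
  - destruct HP as [_ []].
Qed.

Lemma ahead_geod_coord x y P Q : on_geod x y P -> on_geod x y Q ->
  ahead x y P Q <-> geod_coord x y P < geod_coord x y Q.
Proof.
  intros HP HQ. destruct x as [a|]; destruct y as [b|]; unfold ahead.
  - pose proof (proj1 (proj2 HP)) as Hab.
    destruct (on_geod_fin_fin a b P HP) as [HlP [XP _]].
    destruct (on_geod_fin_fin a b Q HQ) as [HlQ [XQ _]].
    set (lP := geod_coord (Fin a) (Fin b) P) in *. set (lQ := geod_coord (Fin a) (Fin b) Q) in *.
    pose proof (pow2_ge_0 lP). pose proof (pow2_ge_0 lQ).
    assert (HD : 0 < (b - a) ^ 2 / ((1 + lP ^ 2) * (1 + lQ ^ 2)))
      by (apply Rdiv_lt_0_compat; [apply pow2_gt_0; lra | nra]).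
    assert (E : (fst Q - fst P) * (b - a) = (b - a) ^ 2 / ((1 + lP ^ 2) * (1 + lQ ^ 2)) * (lQ ^ 2 - lP ^ 2))
      by (rewrite XP, XQ; field; lra).
    rewrite E. replace (lQ ^ 2 - lP ^ 2) with ((lQ - lP) * (lQ + lP)) by ring.
    split; intro Hahead.
    + assert (0 < (lQ - lP) * (lQ + lP)); [|nra].
      apply (Rmult_lt_reg_l _ _ _ HD). lra.
    + apply Rmult_lt_0_compat; [assumption |]. apply Rmult_lt_0_compat; lra.
  - cbn [geod_coord]. lra.
  - destruct HP as [HYP _], HQ as [HYQ _]. unfold inH in HYP, HYQ. cbn [geod_coord].
    unfold Rdiv. rewrite !Rmult_1_l. split; intro Hlt.
    + apply Rinv_0_lt_contravar; lra.
    + apply Rinv_0_lt_contravar in Hlt; [rewrite !Rinv_inv in Hlt; lra |].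
      apply Rinv_0_lt_compat; lra.
  - destruct HP as [_ []].
Qed.

Lemma half_abs_sq z : (Rabs z / 2) ^ 2 = (z / 2) ^ 2.
Proof. unfold Rdiv. rewrite !Rpow_mult_distr, pow2_abs. reflexivity. Qed.

Lemma orth_circles_meet a b t e X Y :
  ((t + e) / 2 - (a + b) / 2) ^ 2 = ((t - e) / 2) ^ 2 + ((a - b) / 2) ^ 2 ->
  (X - (a + b) / 2) ^ 2 + Y ^ 2 = ((a - b) / 2) ^ 2 ->
  (X - (t + e) / 2) ^ 2 + Y ^ 2 = ((t - e) / 2) ^ 2 ->
  (X - a) * (b - t) ^ 2 = (t - a) ^ 2 * (b - X).
Proof.
  intros orth on_ab on_te.
  assert (radical_axis : X * (t + e - a - b) - (t * e - a * b) = 0) by lra.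
  assert (harmonic : e * (2 * t - a - b) - (t * (a + b) - 2 * a * b) = 0) by lra.
  apply Rminus_diag_uniq.
  replace ((X - a) * (b - t) ^ 2 - (t - a) ^ 2 * (b - X))
    with ((2 * t - a - b) * (X * (t + e - a - b) - (t * e - a * b))
          - (X - t) * (e * (2 * t - a - b) - (t * (a + b) - 2 * a * b))) by ring.
  rewrite radical_axis, harmonic. ring.
Qed.

Lemma foot_geod_coord x y p f : p <> x -> p <> y -> foot p x y f ->
  geod_coord x y f = Rabs (ideal_coord x y p).
Proof.
  intros Hpx Hpy [Hf [e [Hep [Horth Hpe]]]].
  unfold geod_orth, gdesc in Horth.
  destruct x as [a|]; destruct y as [b|]; [| | | destruct Hf as [_ []]].
  - destruct Hf as [HY [Hab on_ab]]. unfold inH in HY.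
    destruct (Req_EM_T a b) as [|_]; [contradiction|].
    assert (chord : (fst f - a) * (b - fst f) = snd f ^ 2) by lra.
    pose proof (pow_lt _ 2 HY).
    assert (Hbx : b - fst f <> 0) by (intro Z; rewrite Z in chord; lra).
    cbn [geod_coord ideal_coord].
    destruct p as [t|]; destruct e as [e|]; [| | | contradiction].
    + destruct (Req_EM_T t e) as [->|_]; [contradiction|].
      destruct Hpe as [_ [_ on_te]]. rewrite !half_abs_sq in Horth.
      assert (Hbt : b - t <> 0) by (intro; apply Hpy; f_equal; lra).
      pose proof (orth_circles_meet a b t e (fst f) (snd f) Horth on_ab on_te) as meet.
      replace ((fst f - a) / (b - fst f)) with (Rsqr ((t - a) / (b - t))).
      * apply sqrt_Rsqr_abs.
      * unfold Rsqr. field_simplify_eq; [lra | split; assumption].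
    + destruct Hpe as [_ Xf]. rewrite Xf, <- Horth.
      replace (((a + b) / 2 - a) / (b - (a + b) / 2)) with 1 by (field; lra).
      rewrite sqrt_1, Rabs_R1. reflexivity.
    + destruct Hpe as [_ Xf]. rewrite Xf, <- Horth.
      replace (((a + b) / 2 - a) / (b - (a + b) / 2)) with 1 by (field; lra).
      rewrite sqrt_1, Rabs_left by lra. ring.
  - destruct p as [t|]; [| contradiction]. destruct e as [e|]; [| contradiction].
    destruct (Req_EM_T t e) as [->|_]; [contradiction|].
    destruct Hf as [HY Xf], Hpe as [_ [_ on_te]]. unfold inH in HY.
    cbn [geod_coord ideal_coord]. apply sqr_pos_eq_abs; [assumption |].
    rewrite Xf, <- Horth in on_te. replace e with (2 * a - t) in on_te by lra. lra.
  - destruct p as [t|]; [| contradiction]. destruct e as [e|]; [| contradiction].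
    destruct (Req_EM_T t e) as [->|_]; [contradiction|].
    destruct Hf as [HY Xf], Hpe as [_ [_ on_te]]. unfold inH in HY.
    assert (Yf : snd f = Rabs (b - t)).
    { apply sqr_pos_eq_abs; [assumption |].
      rewrite Xf, <- Horth in on_te. replace e with (2 * b - t) in on_te by lra. lra. }
    cbn [geod_coord ideal_coord]. rewrite Yf, Rabs_div, Rabs_R1; [reflexivity |].
    intro; apply Hpy; f_equal; lra.
Qed.

Lemma sdist_geod_coord x y P Q d : on_geod x y P -> on_geod x y Q -> sdist x y P Q d ->
  d = ln (geod_coord x y Q) - ln (geod_coord x y P).
Proof.
  intros HP HQ Hd.
  pose proof (geod_coord_pos x y P HP). pose proof (geod_coord_pos x y Q HQ).
  destruct Hd as [[Hahead ->] | [Hbehind ->]]; rewrite (dH_geod_coord x y P Q HP HQ).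
  - apply (ahead_geod_coord x y P Q HP HQ), ln_increasing in Hahead; [| assumption].
    rewrite Rabs_left; lra.
  - rewrite (ahead_geod_coord x y P Q HP HQ) in Hbehind.
    pose proof (ln_le (geod_coord x y Q) (geod_coord x y P) ltac:(assumption) ltac:(lra)).
    rewrite Rabs_right; lra.
Qed.

Lemma exp_shear x y p q s : p <> x -> p <> y -> q <> x -> q <> y -> is_shear x y p q s ->
  exp s = Rabs (ideal_coord x y q) / Rabs (ideal_coord x y p).
Proof.
  intros Hpx Hpy Hqx Hqy [f1 [f2 [F1 [F2 Hs]]]].
  rewrite <- (foot_geod_coord x y p f1), <- (foot_geod_coord x y q f2) by assumption.
  destruct F1 as [on1 _], F2 as [on2 _].
  rewrite (sdist_geod_coord x y f1 f2 s on1 on2 Hs).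
  unfold Rminus. rewrite exp_plus, exp_Ropp, !exp_ln by (apply geod_coord_pos; assumption).
  reflexivity.
Qed.

Lemma horocycles_meet_fin_fin r1 r2 c1 c2 z : horocycle (Fin r1) c1 z -> horocycle (Fin r2) c2 z ->
  on_geod (Fin r1) (Fin r2) z -> c1 * c2 = (r2 - r1) ^ 2.
Proof.
  intros H1 H2 [HY [_ on_circle]]. unfold inH in HY.
  pose proof (horocycle_fin_eq _ _ _ H1) as E1. pose proof (horocycle_fin_eq _ _ _ H2) as E2.
  assert (chord : (fst z - r1) * (fst z - r2) + snd z ^ 2 = 0) by lra.
  apply (Rmult_eq_reg_r (snd z ^ 2)); [| apply pow_nonzero; lra].
  transitivity ((c1 * snd z) * (c2 * snd z)); [ring |].
  rewrite <- E1, <- E2.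
  replace (((fst z - r1) ^ 2 + snd z ^ 2) * ((fst z - r2) ^ 2 + snd z ^ 2))
    with (snd z ^ 2 * (r2 - r1) ^ 2 + ((fst z - r1) * (fst z - r2) + snd z ^ 2) ^ 2) by ring.
  rewrite chord. ring.
Qed.

Lemma horocycles_meet_fin_inf r c c' z : horocycle (Fin r) c z -> horocycle Inf c' z ->
  fst z = r -> c = c'.
Proof.
  intros H1 [HY [Hc' Yz]] Xz. unfold inH in HY.
  pose proof (horocycle_fin_eq _ _ _ H1) as E1. rewrite Xz, Yz in E1.
  apply (Rmult_eq_reg_r c'); [| lra]. nra.
Qed.

Lemma ideal_coord_neq0 x y p : x <> y -> p <> x -> p <> y -> ideal_coord x y p <> 0.
Proof.
  intros Hxy Hpx Hpy.
  destruct x as [a|]; destruct y as [b|]; destruct p as [t|]; cbn; try congruence; try lra.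
  - apply Fin_neq in Hpx, Hpy.
    unfold Rdiv. apply Rmult_integral_contrapositive_currified; [lra |].
    apply Rinv_neq_0_compat. lra.
  - apply Fin_neq in Hpx. lra.
  - apply Fin_neq in Hpy. unfold Rdiv. rewrite Rmult_1_l. apply Rinv_neq_0_compat. lra.
Qed.

Lemma horo_signed_lengths_product v1 v2 p q c1 c2 z :
  v1 <> v2 -> p <> v1 -> p <> v2 -> q <> v1 -> q <> v2 ->
  horocycle v1 c1 z -> horocycle v2 c2 z -> on_geod v1 v2 z ->
  horo_scale v1 c1 * (ideal_abscissa_from v1 p - ideal_abscissa_from v1 v2) *
  (horo_scale v2 c2 * (ideal_abscissa_from v2 q - ideal_abscissa_from v2 v1)) *
  ideal_coord v1 v2 p = - ideal_coord v1 v2 q.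
Proof.
  intros H12 Hp1 Hp2 Hq1 Hq2 Z1 Z2 Hz.
  pose proof Z1 as [_ [Hc1 _]]. pose proof Z2 as [_ [Hc2 _]].
  destruct v1 as [r1|]; destruct v2 as [r2|]; [| | | contradiction].
  - assert (Ec2 : c2 = (r2 - r1) ^ 2 / c1)
      by (rewrite <- (horocycles_meet_fin_fin r1 r2 c1 c2 z Z1 Z2 Hz); field; lra).
    rewrite Ec2.
    destruct p as [t|]; destruct q as [u|]; cbn;
      repeat match goal with H : Fin _ <> Fin _ |- _ => apply Fin_neq in H end;
      field; repeat split; lra.
  - destruct p as [t|]; [| contradiction]. destruct q as [u|]; [| contradiction].
    apply Fin_neq in Hp1, Hq1.
    rewrite <- (horocycles_meet_fin_inf r1 c1 c2 z Z1 Z2 (proj2 Hz)).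
    cbn. field. repeat split; lra.
  - destruct p as [t|]; [| contradiction]. destruct q as [u|]; [| contradiction].
    apply Fin_neq in Hp2, Hq2.
    rewrite <- (horocycles_meet_fin_inf r2 c2 c1 z Z2 Z1 (proj2 Hz)).
    cbn. field. repeat split; lra.
Qed.

Lemma horo_lengths_product v1 v2 p q c1 c2 z :
  v1 <> v2 -> p <> v1 -> p <> v2 -> q <> v1 -> q <> v2 ->
  horocycle v1 c1 z -> horocycle v2 c2 z -> on_geod v1 v2 z ->
  horo_scale v1 c1 * Rabs (ideal_abscissa_from v1 p - ideal_abscissa_from v1 v2) *
  (horo_scale v2 c2 * Rabs (ideal_abscissa_from v2 q - ideal_abscissa_from v2 v1))
  = Rabs (ideal_coord v1 v2 q) / Rabs (ideal_coord v1 v2 p).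
Proof.
  intros H12 Hp1 Hp2 Hq1 Hq2 Z1 Z2 Hz.
  pose proof Z1 as [_ [Hc1 _]]. pose proof Z2 as [_ [Hc2 _]].
  pose proof (Rabs_pos_lt _ (ideal_coord_neq0 v1 v2 p H12 Hp1 Hp2)) as Hp.
  rewrite <- (Rabs_right (horo_scale v1 c1)), <- (Rabs_right (horo_scale v2 c2)), <- !Rabs_mult
    by (apply Rle_ge, Rlt_le, horo_scale_pos; assumption).
  apply (Rmult_eq_reg_r (Rabs (ideal_coord v1 v2 p))); [| lra].
  rewrite <- Rabs_mult, (horo_signed_lengths_product v1 v2 p q c1 c2 z), Rabs_Ropp by assumption.
  field. lra.
Qed.

Lemma horo_arc_lengths_ratio v1 v2 p q c1 c2 z L1 L2 :
  v1 <> v2 -> p <> v1 -> p <> v2 -> q <> v1 -> q <> v2 ->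
  horocycle v1 c1 z -> horocycle v2 c2 z -> on_geod v1 v2 z ->
  arc_length (horo_arc v1 v2 p c1) L1 -> arc_length (horo_arc v2 v1 q c2) L2 ->
  L2 = Rabs (ideal_coord v1 v2 q) / Rabs (ideal_coord v1 v2 p) / L1.
Proof.
  intros H12 Hp1 Hp2 Hq1 Hq2 Z1 Z2 Hz HL1 HL2.
  pose proof Z1 as [_ [Hc1 _]]. pose proof Z2 as [_ [Hc2 _]].
  apply horo_arc_length in HL1, HL2; auto.
  assert (L1_pos : 0 < L1).
  { rewrite HL1. apply Rmult_lt_0_compat; [apply horo_scale_pos; assumption |].
    apply Rabs_pos_lt. intro E. apply Hp2, (ideal_abscissa_from_inj v1); auto. lra. }
  rewrite <- (horo_lengths_product v1 v2 p q c1 c2 z), <- HL1, <- HL2 by assumption.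
  field. lra.
Qed.

Lemma Rabs_ideal_coord_swap x y p : x <> y -> p <> x -> p <> y ->
  Rabs (ideal_coord y x p) = / Rabs (ideal_coord x y p).
Proof.
  intros Hxy Hpx Hpy. rewrite <- Rabs_inv.
  destruct x as [a|]; destruct y as [b|]; destruct p as [t|]; cbn; try congruence.
  - apply Fin_neq in Hpx, Hpy. f_equal. field. lra.
  - f_equal. field.
  - apply Fin_neq in Hpx. rewrite <- Rabs_Ropp. f_equal. field. lra.
  - apply Fin_neq in Hpy. rewrite <- Rabs_Ropp. f_equal. field. lra.
Qed.

Lemma on_geod_sym x y P : on_geod x y P -> on_geod y x P.
Proof.
  unfold on_geod. destruct x as [a|]; destruct y as [b|]; intros [HP H]; split; auto.
  destruct H as [Hab on_circle]. split; [auto | lra].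
Qed.

Theorem lemmaA2 (x y v1 v2 p q : ipt) (s c1 c2 L1 L2 : R) (z : R * R) :
  x <> y ->
  ((v1 = x /\ v2 = y) \/ (v1 = y /\ v2 = x)) ->
  p <> x -> p <> y -> q <> x -> q <> y ->
  geod_left_of x y v1 p ->
  geod_left_of y x v2 q ->
  is_shear x y p q s ->
  horocycle v1 c1 z -> on_geod x y z -> horocycle v2 c2 z ->
  arc_length (horo_arc v1 v2 p c1) L1 ->
  arc_length (horo_arc v2 v1 q c2) L2 ->
  (v1 = x -> L2 = exp s / L1) /\ (v1 = y -> L2 = exp (- s) / L1).
Proof.
  intros Hxy Hv Hpx Hpy Hqx Hqy _ _ Hshear Hz1 Hz Hz2 HL1 HL2.
  pose proof (exp_shear x y p q s Hpx Hpy Hqx Hqy Hshear) as Es.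
  pose proof (Rabs_pos_lt _ (ideal_coord_neq0 x y p Hxy Hpx Hpy)) as Mp_pos.
  pose proof (Rabs_pos_lt _ (ideal_coord_neq0 x y q Hxy Hqx Hqy)) as Mq_pos.
  destruct Hv as [[-> ->] | [-> ->]].
  - split; [intros _ | intros E; contradiction (Hxy E)].
    rewrite Es. exact (horo_arc_lengths_ratio x y p q c1 c2 z L1 L2
                         Hxy Hpx Hpy Hqx Hqy Hz1 Hz2 Hz HL1 HL2).
  - split; [intros E; contradiction (Hxy (eq_sym E)) | intros _].
    rewrite (horo_arc_lengths_ratio y x p q c1 c2 z L1 L2 (not_eq_sym Hxy) Hpy Hpx Hqy Hqx
               Hz1 Hz2 (on_geod_sym x y z Hz) HL1 HL2).
    rewrite (Rabs_ideal_coord_swap x y p), (Rabs_ideal_coord_swap x y q), exp_Ropp, Es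
      by assumption.
    f_equal. field. lra.
Qed.
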